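(* Let $\mathbb{T}$ be a time scale, $t_0\in\mathbb{T}$, $b,c:\mathbb{T}\to[0,\infty)$, $x_0>0$, $y_0>0$, $z_0\ge0$, and let $(x,y,z)$ be a solution of $$x^{\Delta}=-\frac{b(t)\,x\,y^{\sigma}}{x+y},\qquad y^{\Delta}=\frac{b(t)\,x\,y^{\sigma}}{x+y}-c(t)\,y^{\sigma},\qquad z^{\Delta}=c(t)\,y^{\sigma},$$ with $x,y:\mathbb{T}\to(0,\infty)$, $z:\mathbb{T}\to[0,\infty)$, $x(t_0)=x_0$, $y(t_0)=y_0$, $z(t_0)=z_0$. If $c(t)\ge b(t)$ for all $t\in\mathbb{T}$, or $\frac{x_0}{x_0+y_0}b(t)\le c(t)\le b(t)$ for all $t\in\mathbb{T}$, then $y$ is decreasing, i.e. $y^{\Delta}(t)\le0$ for all $t$. If $\frac{x_0}{x_0+y_0}b(t_0)\ge c(t_0)$, then $y^{\Delta}(t_0)\ge0$.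
   Context: A time scale $\mathbb{T}$ is a nonempty closed subset of $\mathbb{R}$. $\sigma(t)=\inf\{s\in\mathbb{T}:s>t\}$, $f^{\sigma}=f\circ\sigma$. $f^{\Delta}$ is the delta (Hilger) derivative: for every $\varepsilon>0$ there is $\delta>0$ with $|f(\sigma(t))-f(s)-f^{\Delta}(t)(\sigma(t)-s)|\le\varepsilon|\sigma(t)-s|$ for $s\in(t-\delta,t+\delta)\cap\mathbb{T}$. *)

From HB Require Import structures.
From mathcomp Require Import all_boot all_order all_algebra.
From mathcomp Require Import all_classical all_reals all_analysis.
Set Implicit Arguments. Unset Strict Implicit. Unset Printing Implicit Defensive.
Import Order.TTheory GRing.Theory Num.Theory.
Import numFieldNormedType.Exports.
Local Open Scope classical_set_scope.
Local Open Scope ring_scope.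

Definition time_scale {R : realType} (T : set R) : Prop :=
  closed T /\ T !=set0.

(* forward jump operator sigma(t) = inf {s in T | s > t}, with the
   standard convention inf(emptyset) = sup T, i.e. sigma(max T) = max T *)
Definition sigma {R : realType} (T : set R) (t : R) : R :=
  if pselect (exists s, T s /\ t < s) then inf [set s | T s /\ t < s] else t.

Definition delta_deriv {R : realType} (T : set R) (f : R -> R) (t l : R) : Prop :=
  forall eps : R, 0 < eps -> exists delta : R, 0 < delta /\
    forall s, T s -> `|t - s| < delta ->
      `|f (sigma T t) - f s - l * (sigma T t - s)| <= eps * `|sigma T t - s|.

From HB Require Import structures.
From mathcomp Require Import all_boot all_order all_algebra.
From mathcomp Require Import all_classical all_reals all_analysis.
From mathcomp Require Import ring lra.
Import Order.TTheory GRing.Theory Num.Theory.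
Import numFieldNormedType.Exports.
Local Open Scope classical_set_scope.
Local Open Scope ring_scope.
Set Implicit Arguments. Unset Strict Implicit.

(* Since y^Δ = y^σ (b x / (x + y) - c), everything hinges on the share
   x / (x + y) of susceptibles, which lies in (0, 1) and equals
   x0 / (x0 + y0) at t0.  If c >= b the bracket is at most b - c <= 0.  If
   c <= b, the quotient rule gives (y / x)^Δ = x y^σ (b - c) / (x x^σ) >= 0,
   so y / x is nondecreasing and the share never exceeds x0 / (x0 + y0); the
   bracket is then at most x0 / (x0 + y0) b - c <= 0.  A nonnegative delta
   derivative forces monotonicity by the induction principle for time scales,
   applied to f(t0) - eps (t - t0) <= f(t) for every eps > 0. *)

Section TimeScale.
Variables (R : realType) (U : set R).

Lemma closed_adherent (m : R) : closed U ->
  (forall e : R, 0 < e -> exists2 a, U a & `|m - a| < e) -> U m.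
Proof.
move=> cU near_m; apply: cU => B /nbhs_ballP [e e0 eB].
by have [a Ua ma] := near_m e e0; exists a; split => //; exact: eB.
Qed.

Lemma closed_sup_mem (A : set R) : closed U -> A `<=` U -> A !=set0 ->
  has_ubound A -> U (sup A).
Proof.
move=> cU AU A0 Aub; rewrite (closure_id U).1 //.
exact: closureS AU _ (closure_sup A0 Aub).
Qed.

Let has_inf_right t s : U s -> t < s -> has_inf [set r | U r /\ t < r].
Proof. by move=> Us ts; split; [exists s | exists t => r [_ /ltW]]. Qed.

Lemma sigma_ge t : t <= sigma U t.
Proof.
rewrite /sigma; case: pselect => [[s [Us ts]]|//].
by apply: lb_le_inf; [exists s | move=> r [_ /ltW]].
Qed.

Lemma sigma_le t s : U s -> t < s -> sigma U t <= s.
Proof.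
move=> Us ts; rewrite /sigma; case: pselect => [?|]; last by case; exists s.
by apply: ge_inf; [exact: (has_inf_right Us ts).2 |].
Qed.

Lemma sigma_in t : closed U -> U t -> U (sigma U t).
Proof.
move=> cU Ut; rewrite /sigma; case: pselect => [[s [Us ts]]|//].
apply: closed_adherent => // e e0.
have hinf := has_inf_right Us ts.
have [a [Ua ta] ae] := inf_adherent e0 hinf.
exists a => //; have ia := ge_inf hinf.2 (conj Ua ta).
by rewrite ler0_norm ?subr_le0 //; lra.
Qed.

Lemma right_dense_approx t s : U s -> t < s -> sigma U t = t ->
  forall e : R, 0 < e -> exists2 u, U u & t < u < t + e.
Proof.
move=> Us ts; rewrite /sigma; case: pselect => [?|]; last by case; exists s.
move=> inf_t e e0; have [u [Uu tu] ue] := inf_adherent e0 (has_inf_right Us ts).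
by exists u => //; rewrite tu -inf_t.
Qed.

End TimeScale.

Section DeltaDerivative.
Variables (R : realType) (U : set R).
Local Notation sigma := (sigma U).

Lemma delta_derivP f t l : delta_deriv U f t l <->
  forall e, 0 < e -> \forall a \near t, U a ->
    `|f (sigma t) - f a - l * (sigma t - a)| <= e * `|sigma t - a|.
Proof.
split=> df e /df.
- by move=> [d [d0 fd]]; apply/nbhs_ballP; exists d => // a /= /[swap]; exact: fd.
- by move=> /nbhs_ballP [d d0 fd]; exists d; split=> // a Ua ta; exact: fd.
Qed.

Lemma delta_deriv_jump f t l : delta_deriv U f t l -> U t ->
  f (sigma t) = f t + l * (sigma t - t).
Proof.
move=> df Ut; apply/eqP; rewrite -subr_eq0 opprD addrA -normr_le0.
apply/ler_addgt0Pr => e e0; rewrite add0r.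
have mu0 : 0 < `|sigma t - t| + 1 by rewrite ltr_wpDl.
have [d [d0 /(_ t Ut)]] := df _ (divr_gt0 e0 mu0).
rewrite subrr normr0 => /(_ d0) /le_trans; apply.
by rewrite mulrAC ler_pdivrMr //; nra.
Qed.

Lemma near_dist_le (t e : R) : 0 < e -> \forall a \near t, `|t - a| <= e.
Proof. by move=> e0; apply/nbhs_ballP; exists e => // a /= /ltW. Qed.

Lemma delta_deriv_cont f t l : delta_deriv U f t l -> U t ->
  forall e, 0 < e -> \forall a \near t, U a -> `|f t - f a| <= e.
Proof.
move=> df Ut e e0; have jump := delta_deriv_jump df Ut.
set k1 := 2 * (`|sigma t - t| + 1); set k2 := 2 * (`|l| + 1).
have k1_gt0 : 0 < k1 by rewrite mulr_gt0 // ltr_wpDl.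
have k2_gt0 : 0 < k2 by rewrite mulr_gt0 // ltr_wpDl.
move/delta_derivP: df => /(_ _ (divr_gt0 e0 k1_gt0)) near_f.
near=> a => Ua.
have fa : `|f (sigma t) - f a - l * (sigma t - a)| <= e / k1 * `|sigma t - a|.
  by move: Ua; near: a.
have ta1 : `|t - a| <= 1 by near: a; exact: near_dist_le.
have ta2 : `|t - a| <= e / k2 by near: a; exact: near_dist_le (divr_gt0 e0 k2_gt0).
have -> : f t - f a = (f (sigma t) - f a - l * (sigma t - a)) + l * (t - a).
  by rewrite jump; ring.
apply: le_trans (ler_normD _ _) _; rewrite normrM.
have sa : `|sigma t - a| <= `|sigma t - t| + 1.
  have -> : sigma t - a = (sigma t - t) + (t - a) by ring.
  by apply: le_trans (ler_normD _ _) _; rewrite lerD2l.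
have : e / k1 * `|sigma t - a| <= e / 2.
  by rewrite mulrAC ler_pdivrMr // /k1; nra.
have : `|l| * `|t - a| <= e / 2.
  apply: le_trans (ler_wpM2l (normr_ge0 l) ta2) _.
  rewrite mulrA ler_pdivrMr // /k2; have := normr_ge0 l; nra.
lra.
Unshelve. all: by end_near.
Qed.

Lemma delta_deriv_near_norm_ge f t l : delta_deriv U f t l -> U t -> f t != 0 ->
  \forall a \near t, U a -> `|f t| / 2 <= `|f a|.
Proof.
move=> df Ut ft0; have ft_gt0 : 0 < `|f t| / 2 by rewrite divr_gt0 ?normr_gt0.
apply: filterS (delta_deriv_cont df Ut ft_gt0) => a fa /fa.
have : `|f t| <= `|f t - f a| + `|f a| by rewrite -{1}(subrK (f a) (f t)) ler_normD.
lra.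
Qed.

(* The error term of [f / g] at [a], with [h = sigma t - a], split into those
   of [f] and [g] plus a term controlled by the continuity of [g]. *)
Lemma div_error_split (F : fieldType) (fs fa gt gs ga lf lg h : F) :
  gt != 0 -> gs != 0 -> ga != 0 ->
  fs / gs - fa / ga - (lf * gs - fs * lg) / (gt * gs) * h =
  (h * (lf * gs - fs * lg) * (gt - ga) / gt
    + ((fs - fa - lf * h) * gs - (gs - ga - lg * h) * fs)) / (gs * ga).
Proof. by move=> gt0 gs0 ga0; field; rewrite gt0 gs0 ga0. Qed.

Lemma delta_deriv_div f g t lf lg : U t ->
  delta_deriv U f t lf -> delta_deriv U g t lg ->
  g t != 0 -> g (sigma t) != 0 ->
  delta_deriv U (fun s => f s / g s) t
    ((lf * g t - f t * lg) / (g t * g (sigma t))).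
Proof.
move=> Ut df dg gt0 gs0; apply/delta_derivP => e e0.
have jf := delta_deriv_jump df Ut; have jg := delta_deriv_jump dg Ut.
set s := sigma t in jf jg gs0 *.
have -> : lf * g t - f t * lg = lf * g s - f s * lg by rewrite jf jg; ring.
set N := lf * g s - f s * lg; set G := `|g t|; set S := `|g s|.
have [G0 S0] : 0 < G /\ 0 < S by split; rewrite normr_gt0.
set cg := e * S * G ^+ 2 / (4 * (`|N| + 1)).
set eta := e * S * G / (4 * (S + `|f s|)).
have cg0 : 0 < cg by rewrite !divr_gt0 ?mulr_gt0 ?exprn_gt0 // ltr_wpDl.
have eta0 : 0 < eta by rewrite !divr_gt0 ?mulr_gt0 // ltr_pwDl.
have /delta_derivP /(_ _ eta0) near_f := df.
have /delta_derivP /(_ _ eta0) near_g := dg.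
have near_g_cont := delta_deriv_cont dg Ut cg0.
have near_g_ge := delta_deriv_near_norm_ge dg Ut gt0.
near=> a => Ua.
have Ef : `|f s - f a - lf * (s - a)| <= eta * `|s - a| by move: Ua; near: a.
have Eg : `|g s - g a - lg * (s - a)| <= eta * `|s - a| by move: Ua; near: a.
have ga_cont : `|g t - g a| <= cg by move: Ua; near: a.
have ga_ge : G / 2 <= `|g a| by move: Ua; near: a.
have ga0 : g a != 0 by rewrite -normr_gt0; lra.
rewrite div_error_split //.
have hA : `|(s - a) * N * (g t - g a) / g t| <= e * S * G / 4 * `|s - a|.
  rewrite normf_div !normrM -/G ler_pdivrMr // -mulrA.
  have : `|N| * `|g t - g a| <= e * S * G ^+ 2 / 4.
    apply: le_trans (ler_wpM2l (normr_ge0 N) ga_cont) _.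
    rewrite /cg mulrA ler_pdivrMr ?mulr_gt0 ?ltr_wpDl //.
    have : 0 <= e * S * G ^+ 2 by rewrite !mulr_ge0 // ltW.
    nra.
  have := normr_ge0 (s - a); rewrite expr2; nra.
have hB : `|(f s - f a - lf * (s - a)) * g s - (g s - g a - lg * (s - a)) * f s|
    <= e * S * G / 4 * `|s - a|.
  apply: le_trans (ler_normB _ _) _; rewrite !normrM -/S.
  have <- : eta * (S + `|f s|) = e * S * G / 4.
    by rewrite /eta; field; rewrite gt_eqF // ltr_pwDl.
  have := ler_wpM2r (ltW S0) Ef; have := ler_wpM2r (normr_ge0 (f s)) Eg.
  lra.
rewrite normf_div normrM -/S ler_pdivrMr ?mulr_gt0 //; last by lra.
apply: le_trans (ler_normD _ _) _.
have : 0 <= e * `|s - a| * S * (`|g a| - G / 2) by rewrite !mulr_ge0 ?subr_ge0 // ltW.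
lra.
Unshelve. all: by end_near.
Qed.

End DeltaDerivative.

Section TimeScaleInduction.
Variables (R : realType) (U : set R) (t0 : R).
Hypotheses (U_closed : closed U) (U_t0 : U t0) (t0_min : forall t, U t -> t0 <= t).

(* [rho t = t] in the usual notation, for [t] above [min U]. *)
Definition left_dense (t : R) := forall e, 0 < e -> exists2 s, U s & t - e < s < t.

Section Induction.
Variable P : R -> Prop.
Hypothesis P_t0 : P t0.
Hypothesis P_scattered : forall t, U t -> t < sigma U t -> P t -> P (sigma U t).
Hypothesis P_dense : forall t, U t -> sigma U t = t -> P t ->
  exists2 d, 0 < d & forall r, U r -> t < r < t + d -> P r.
Hypothesis P_left : forall t, U t -> left_dense t ->
  (forall s, U s -> s < t -> P s) -> P t.

Lemma extend_good_prefix m t1 : U m -> U t1 -> m < t1 ->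
  (forall s, U s -> s <= m -> P s) ->
  exists2 u, [/\ U u, m < u & u <= t1] & forall s, U s -> s <= u -> P s.
Proof.
move=> Um Ut1 m_t1 good_m; have Pm := good_m m Um (lexx m).
have [sm|ms] := eqVneq (sigma U m) m.
- have [d d0 P_right] := P_dense Um sm Pm.
  have dd : Num.min d (t1 - m) <= d by rewrite ge_min lexx.
  have dt : Num.min d (t1 - m) <= t1 - m by rewrite ge_min lexx orbT.
  have [|u Uu /andP[mu um]] := right_dense_approx Ut1 m_t1 sm (e := Num.min d (t1 - m)).
    by rewrite lt_min d0 subr_gt0.
  exists u; first by split=> //; lra.
  move=> r Ur ru; have [rm|mr] := lerP r m; first exact: good_m.
  by apply: P_right; rewrite // mr /=; lra.
- have m_sm : m < sigma U m by rewrite lt_neqAle eq_sym ms sigma_ge.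
  exists (sigma U m); first by split; [exact: sigma_in | | exact: sigma_le].
  move=> r Ur rs; have [rm|mr] := lerP r m; first exact: good_m.
  have -> : r = sigma U m by apply/le_anti; rewrite rs sigma_le.
  exact: P_scattered.
Qed.

(* Bohner and Peterson's induction principle: were it to fail at t1, the
   supremum of the initial segments on which P holds could still be extended. *)
Lemma time_scale_ind t1 : U t1 -> P t1.
Proof.
move=> Ut1; apply: contrapT => nP1.
pose A := [set t | U t /\ t <= t1 /\ forall s, U s -> s <= t -> P s].
have A_t0 : A t0.
  split=> //; split=> [|s Us st0]; first exact: t0_min.
  by have -> : s = t0 by apply/le_anti; rewrite st0 t0_min.
have A_sup : has_sup A by split; [exists t0 | exists t1 => r [_ []]].
set m := sup A.
have m_ub : ubound A m := sup_upper_bound A_sup.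
have m_t1 : m <= t1 by apply: ge_sup; [exists t0 | move=> r [_ []]].
have Um : U m by apply: closed_sup_mem U_closed _ A_sup.1 A_sup.2 => r [].
have below_m s : U s -> s < m -> P s.
  rewrite -subr_gt0 => Us sm; have [a [_ [_ Pa]] sa] := sup_adherent sm A_sup.
  by apply: Pa Us _; rewrite -/m in sa; lra.
have Pm : P m.
  have [[_ [_ Pm]]|nAm] := pselect (A m); first exact: Pm m Um (lexx m).
  apply: P_left => // e e0; have [a Aa ma] := sup_adherent e0 A_sup.
  have [Ua _] := Aa; exists a => //.
  rewrite -/m in ma; rewrite ma /= lt_neqAle m_ub // andbT.
  by apply: contra_not_neq nAm => <-.
have good_m s : U s -> s <= m -> P s.
  by move=> Us; rewrite le_eqVlt => /predU1P[-> //|]; exact: below_m.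
have m_lt_t1 : m < t1.
  by rewrite lt_neqAle m_t1 andbT; apply/eqP => mt1; apply: nP1; rewrite -mt1.
have [u [Uu mu ut1] good_u] := extend_good_prefix Um Ut1 m_lt_t1 good_m.
by have := m_ub u (conj Uu (conj ut1 good_u)); lra.
Qed.

End Induction.

Lemma delta_deriv_ge0_le f fD :
  (forall t, U t -> delta_deriv U f t (fD t)) -> (forall t, U t -> 0 <= fD t) ->
  forall t, U t -> f t0 <= f t.
Proof.
move=> df fD_ge0 t Ut.
(* The slack absorbs the o(r - s) error at right-dense points. *)
suff slack e : 0 < e -> f t0 - e * (t - t0) <= f t.
  apply/ler_addgt0Pr => e e0.
  have tt0 : 0 < t - t0 + 1 by have := t0_min Ut; lra.
  have := slack _ (divr_gt0 e0 tt0).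
  suff : e / (t - t0 + 1) * (t - t0) <= e by lra.
  by rewrite mulrAC ler_pdivrMr //; have := t0_min Ut; nra.
move=> e0; apply: (@time_scale_ind (fun s => f t0 - e * (s - t0) <= f s)) => //.
- by rewrite subrr mulr0 subr0.
- move=> s Us ss Ps; rewrite (delta_deriv_jump (df s Us) Us).
  have : 0 <= fD s * (sigma U s - s) by rewrite mulr_ge0 ?fD_ge0 // subr_ge0 ltW.
  nra.
- move=> s Us ss Ps; have [d [d0 fd]] := df s Us e e0.
  exists d => // r Ur /andP[sr rd].
  have rs_dist : `|s - r| = r - s by rewrite distrC ger0_norm // subr_ge0 ltW.
  have rd' : r - s < d by lra.
  have := fd r Ur; rewrite ss rs_dist => /(_ rd'); rewrite ler_norml => /andP[_].
  have : 0 <= fD s * (r - s) by rewrite mulr_ge0 ?fD_ge0 // subr_ge0 ltW.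
  nra.
- move=> s Us s_ld below; apply/ler_addgt0Pr => eta eta0.
  have /nbhs_ballP[d d0 near_f] := delta_deriv_cont (df s Us) Us eta0.
  have [r Ur /andP[sr rs]] := s_ld d d0.
  have fr : `|f s - f r| <= eta.
    by apply: near_f Ur; rewrite /ball /= ger0_norm ?subr_ge0 ?ltW //; lra.
  have := below r Ur rs; move: fr; rewrite ler_norml => /andP[fr _].
  have : 0 <= e * (s - r) by rewrite mulr_ge0 ?subr_ge0 ?ltW.
  lra.
Qed.

End TimeScaleInduction.

Section SIRModel.
Variables (R : realType) (T : set R) (t0 : R) (b c x y xD yD : R -> R).
Local Notation U := [set s | T s /\ t0 <= s].
Local Notation ys t := (y (sigma U t)).
Hypotheses (T_closed : closed T) (T_t0 : T t0).
Hypothesis xy_gt0 : forall t, U t -> 0 < x t /\ 0 < y t.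
Hypothesis dx : forall t, U t -> delta_deriv U x t (xD t).
Hypothesis dy : forall t, U t -> delta_deriv U y t (yD t).
Hypothesis xD_eq : forall t, U t -> xD t = - (b t * x t * ys t / (x t + y t)).
Hypothesis yD_eq : forall t, U t -> yD t = b t * x t * ys t / (x t + y t) - c t * ys t.

Let U_closed : closed U := closedI T_closed (@closed_ge _ t0).

Lemma ys_gt0 t : U t -> 0 < ys t.
Proof. by move=> Ut; have [] := xy_gt0 (sigma_in U_closed Ut). Qed.

Lemma yD_share t : U t -> yD t = ys t * (x t / (x t + y t) * b t - c t).
Proof. by move=> Ut; rewrite yD_eq //; ring. Qed.

Lemma y_over_x_ge (c_le_b : forall t, T t -> c t <= b t) t :
  U t -> y t0 / x t0 <= y t / x t.
Proof.
have U_t0 : U t0 by split.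
move: t; apply: (delta_deriv_ge0_le U_closed U_t0 (fun s Us => Us.2)
  (f := fun s => y s / x s)
  (fD := fun s => (yD s * x s - y s * xD s) / (x s * x (sigma U s)))).
- move=> s Us; have [xs _] := xy_gt0 Us; have [xss _] := xy_gt0 (sigma_in U_closed Us).
  by apply: delta_deriv_div; rewrite ?gt_eqF //; [exact: dy | exact: dx].
- move=> s Us; have [xs ys_pos] := xy_gt0 Us.
  have [xss _] := xy_gt0 (sigma_in U_closed Us).
  have -> : yD s * x s - y s * xD s = x s * ys s * (b s - c s).
    by rewrite yD_eq // xD_eq //; field; rewrite gt_eqF // addr_gt0.
  have [Ts _] := Us.
  by rewrite divr_ge0 ?mulr_ge0 ?subr_ge0 ?c_le_b ?ltW ?ys_gt0.
Qed.

Lemma x_share_le (c_le_b : forall t, T t -> c t <= b t) t :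
  U t -> x t / (x t + y t) <= x t0 / (x t0 + y t0).
Proof.
move=> Ut; have [xt yt] := xy_gt0 Ut; have [xt0 yt0] : 0 < x t0 /\ 0 < y t0 by exact: xy_gt0.
have := y_over_x_ge c_le_b Ut.
rewrite ler_pdivrMr // mulrAC ler_pdivlMr // => ratio.
rewrite ler_pdivrMr ?addr_gt0 // mulrAC ler_pdivlMr ?addr_gt0 //.
lra.
Qed.

End SIRModel.

Theorem theorem28 (R : realType) (T : set R) (t0 : R) (b c : R -> R)
  (x0 y0 z0 : R) (x y z xD yD zD : R -> R) :
  time_scale T -> T t0 ->
  (forall t, T t -> 0 <= b t) -> (forall t, T t -> 0 <= c t) ->
  0 < x0 -> 0 < y0 -> 0 <= z0 ->
  (* the solution lives on T_{t0} = T ∩ [t0, +oo) *)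
  (forall t, T t -> t0 <= t -> 0 < x t /\ 0 < y t /\ 0 <= z t) ->
  x t0 = x0 -> y t0 = y0 -> z t0 = z0 ->
  (forall t, T t -> t0 <= t ->
     delta_deriv [set s | T s /\ t0 <= s] x t (xD t) /\
     delta_deriv [set s | T s /\ t0 <= s] y t (yD t) /\
     delta_deriv [set s | T s /\ t0 <= s] z t (zD t)) ->
  (forall t, T t -> t0 <= t ->
     let ys := y (sigma [set s | T s /\ t0 <= s] t) in
     xD t = - (b t * x t * ys / (x t + y t)) /\
     yD t = b t * x t * ys / (x t + y t) - c t * ys /\
     zD t = c t * ys) ->
  (((forall t, T t -> b t <= c t) \/
    (forall t, T t -> x0 / (x0 + y0) * b t <= c t /\ c t <= b t)) ->
     forall t, T t -> t0 <= t -> yD t <= 0) /\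
  (c t0 <= x0 / (x0 + y0) * b t0 -> 0 <= yD t0).
Proof.
move=> [T_closed _] T_t0 b_ge0 _ _ _ _ xyz_pos <- <- _ dxyz eqs.
set U := [set s | T s /\ t0 <= s] in dxyz eqs *.
have xy_gt0 t : U t -> 0 < x t /\ 0 < y t.
  by case=> Tt tt0; have [? [? _]] := xyz_pos t Tt tt0.
have dx t (Ut : U t) := (dxyz t Ut.1 Ut.2).1.
have dy t (Ut : U t) := (dxyz t Ut.1 Ut.2).2.1.
have xD_eq t (Ut : U t) := (eqs t Ut.1 Ut.2).1.
have yD_eq t (Ut : U t) := (eqs t Ut.1 Ut.2).2.1.
have ys_pos := ys_gt0 T_closed xy_gt0.
split=> [c_cases t Tt tt0|c_le].
- have Ut : U t by [].
  have [xt yt] := xy_gt0 t Ut.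
  rewrite (yD_share yD_eq) // pmulr_rle0 ?ys_pos // subr_le0.
  case: c_cases => [b_le_c|c_between].
    apply: le_trans (b_le_c t Tt); rewrite ler_piMl ?b_ge0 //.
    by rewrite ler_pdivrMr ?addr_gt0 // mul1r lerDl ltW.
  have [lb_c c_le_b] := c_between t Tt.
  apply: le_trans lb_c; rewrite ler_wpM2r ?b_ge0 //.
  exact: x_share_le T_closed T_t0 xy_gt0 dx dy xD_eq yD_eq (fun s Ts => (c_between s Ts).2) t Ut.
- by rewrite (yD_share yD_eq) // pmulr_rge0 ?ys_pos // subr_ge0.
Qed.
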